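(* Let $R$ be a generalized p.q.-Baer $*$-ring. Then for every $x\in R$ there exists $n\in\mathbb N$ such that $r_R((xR)^n)\cap (x^* )^nR=\{0\}$.
   Context: A $*$-ring is a ring with an involution; a projection is $e$ with $e=e^*=e^2$. $r_R(S)=\{a\in R: sa=0\ \forall s\in S\}$. A $*$-ring $R$ is a generalized p.q.-Baer $*$-ring if for every principal ideal $I$ of $R$ there exist a positive integer $n$ and a projection $e\in R$ with $r_R(I^n)=eR$; in the paper this is used in the form: for every $x\in R$ there are $n\in\mathbb N$ and a projection $e$ with $r_R((xR)^n)=eR$. Such a ring has a unity. *)

From HB Require Import structures.
From mathcomp Require Import all_boot all_algebra.
Set Implicit Arguments. Unset Strict Implicit. Unset Printing Implicit Defensive.
Import GRing.Theory.
Local Open Scope ring_scope.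

(* Subsets of a ring are predicates R -> Prop. Rings are pzRingType (unital,
   possibly the zero ring). *)

Definition is_involution (R : pzRingType) (star : R -> R) : Prop :=
  (forall x y, star (x + y) = star x + star y) /\
  (forall x y, star (x * y) = star y * star x) /\
  (forall x, star (star x) = x).

Definition is_projection (R : pzRingType) (star : R -> R) (e : R) : Prop :=
  e = star e /\ e = e * e.

Definition rann (R : pzRingType) (S : R -> Prop) : R -> Prop :=
  fun a => forall s, S s -> s * a = 0.

Definition rprin (R : pzRingType) (a : R) : R -> Prop :=
  fun z => exists r, z = a * r.

Inductive addspan (R : pzRingType) (S : R -> Prop) : R -> Prop :=
| addspan0 : addspan S 0
| addspan_gen s : S s -> addspan S s
| addspanD a b : addspan S a -> addspan S b -> addspan S (a + b)
| addspanN a : addspan S a -> addspan S (- a).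

Definition setmul (R : pzRingType) (I J : R -> Prop) : R -> Prop :=
  addspan (fun z => exists i j, I i /\ J j /\ z = i * j).

(* I^n, n >= 1 (I^1 = I, I^(m+1) = I^m I); I^0 := R by convention (unused) *)
Fixpoint setpow (R : pzRingType) (I : R -> Prop) (n : nat) : R -> Prop :=
  match n with
  | 0 => fun _ => True
  | m.+1 => match m with 0 => I | _ => setmul (setpow I m) I end
  end.

Definition gen_pq_Baer (R : pzRingType) (star : R -> R) : Prop :=
  forall x : R, exists n : nat, exists e : R,
    (0 < n)%N /\ is_projection star e /\
    (forall a, rann (setpow (rprin x) n) a <-> rprin e a).

(* If r((xR)^n) = eR with e a projection, then x^n lies in (xR)^n, so x^n e = 0 and,
   applying the involution, e (x^* )^n = 0.  An element a of r((xR)^n) satisfies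
   a = e a; if moreover a = (x^* )^n r, then a = e (x^* )^n r = 0. *)
From mathcomp Require Import all_boot all_algebra.
Set Implicit Arguments. Unset Strict Implicit. Unset Printing Implicit Defensive.
Local Open Scope ring_scope.
Import GRing.Theory.

Lemma exp_in_setpow_rprin (R : pzRingType) (x : R) (n : nat) :
  (0 < n)%N -> setpow (rprin x) n (x ^+ n).
Proof.
case: n => // n _; elim: n => [|m IH]; first by exists 1; rewrite expr1 mulr1.
rewrite exprSr /=; apply: addspan_gen.
by exists (x ^+ m.+1), x; split; [exact: IH | split; [exists 1; rewrite mulr1 |]].
Qed.

Section Involution.

Variables (R : pzRingType) (star : R -> R).
Hypothesis star_inv : is_involution star.

Lemma star0 : star 0 = 0.
Proof.
have [starD _] := star_inv.
by apply: (addrI (star 0)); rewrite addr0 -starD addr0.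
Qed.

Lemma star1 : star 1 = 1.
Proof.
have [_ [starM starK]] := star_inv.
by have := starM 1 (star 1); rewrite mul1r starK mul1r.
Qed.

Lemma star_exp (x : R) (n : nat) : star (x ^+ n) = star x ^+ n.
Proof.
have [_ [starM _]] := star_inv.
elim: n => [|n IH]; first by rewrite !expr0 star1.
by rewrite exprSr starM IH exprS.
Qed.

Lemma rann_projection_cap_star (S : R -> Prop) (e y a : R) :
  is_projection star e -> (forall b, rann S b <-> rprin e b) -> S y ->
  rann S a -> rprin (star y) a -> a = 0.
Proof.
move=> [e_sym e_idem] rannSE Sy Sa [r a_def].
have [_ [starM _]] := star_inv.
have ye0 : y * e = 0 by apply: (proj2 (rannSE e)) => //; exists 1; rewrite mulr1.
have ey0 : e * star y = 0 by rewrite {1}e_sym -starM ye0 star0.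
have [s a_eq] := proj1 (rannSE _) Sa.
by rewrite a_eq e_idem -mulrA -a_eq a_def mulrA ey0 mul0r.
Qed.

End Involution.

Theorem mainTheorem3 (R : pzRingType) (star : R -> R) :
  is_involution star -> gen_pq_Baer star ->
  forall x : R, exists n : nat, (0 < n)%N /\
    (forall a : R, rann (setpow (rprin x) n) a ->
                   rprin (star x ^+ n) a -> a = 0).
Proof.
move=> star_inv pqBaer x.
have [n [e [n_gt0 [proj_e rannE]]]] := pqBaer x.
exists n; split => // a Sa.
rewrite -(star_exp star_inv).
exact: (rann_projection_cap_star star_inv proj_e rannE (exp_in_setpow_rprin x n_gt0) Sa).
Qed.
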